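(* Let $\mathbf{P}=(X,P)$ be a CPT poset and let $M$ be a strong module of $\mathbf{P}$. If there exists a CPT representation $\{W_x\}_{x\in X}$ of $\mathbf{P}$ in which some element $x\in M$ is represented by a trivial path (a single vertex), then no element of $M$ is greater than an element of $X\setminus M$; that is, there are no $m\in M$ and $y\in X\setminus M$ with $y<m$.
   Context: A CPT representation of a poset $\mathbf{P}=(X,P)$ assigns to each $x\in X$ a path $W_x$ (vertex set) of a host tree $T$ so that $x<y$ iff $W_x\subsetneq W_y$. A set $M\subseteq X$ is a module if every $y\notin M$ is comparable to all elements of $M$ or incomparable to all of them; it is strong if it does not properly overlap any other module (for every module $M'$, $M\cap M'=\emptyset$ or $M\subseteq M'$ or $M'\subseteq M$). A trivial path is a path consisting of a single vertex. *)

From mathcomp Require Import all_boot.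
Set Implicit Arguments. Unset Strict Implicit. Unset Printing Implicit Defensive.

Definition strict_poset (X : finType) (lt : rel X) : Prop :=
  irreflexive lt /\ transitive lt.

Definition is_tree (T : finType) (e : rel T) : Prop :=
  [/\ symmetric e, irreflexive e, 0 < #|T|,
      (forall u v : T, exists p : seq T, path e u p /\ last u p = v)
    & (forall c : seq T, uniq c -> 2 < size c -> ~~ cycle e c)].

Definition is_path_set (T : finType) (e : rel T) (W : {set T}) : Prop :=
  exists (x : T) (p : seq T), [/\ uniq (x :: p), path e x p & W = [set v in x :: p]].

Definition CPT_rep (X : finType) (lt : rel X) (T : finType) (e : rel T)
    (W : X -> {set T}) : Prop :=
  [/\ is_tree e, (forall x, is_path_set e (W x))
    & (forall x y, lt x y <-> W x \proper W y)].

Definition CPT_poset (X : finType) (lt : rel X) : Prop :=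
  strict_poset lt /\
  exists (T : finType) (e : rel T) (W : X -> {set T}), CPT_rep lt e W.

Definition comparable (X : finType) (lt : rel X) (x y : X) : bool :=
  lt x y || lt y x.

Definition is_module (X : finType) (lt : rel X) (M : {set X}) : Prop :=
  forall y, y \notin M ->
    (forall m, m \in M -> comparable lt y m) \/
    (forall m, m \in M -> ~~ comparable lt y m).

Definition strong_module (X : finType) (lt : rel X) (M : {set X}) : Prop :=
  is_module lt M /\
  forall M' : {set X}, is_module lt M' ->
    [\/ M :&: M' = set0, M \subset M' | M' \subset M].

Definition trivial_path (T : finType) (W : {set T}) : Prop := #|W| = 1.

From Pilot Require Import Defs.
From mathcomp Require Import all_boot.

(* A trivial path cannot strictly contain another (nonempty) path, so the
   element [x] of [M] with a trivial path is minimal; an element [y] outside [M]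
   below some [m] of [M] is comparable to all of [M], hence [x < y < m].  Then
   [y], the elements of [M] below [y], and the elements outside [M] squeezed
   between the two halves of [M] form a module that overlaps [M] without being
   comparable to it for inclusion, so [M] is not strong. *)

Set Implicit Arguments.
Unset Strict Implicit.
Unset Printing Implicit Defensive.

Lemma path_set_neq0 (T : finType) (e : rel T) (W : {set T}) :
  is_path_set e W -> W != set0.
Proof.
by move=> [v [p [_ _ ->]]]; apply/set0Pn; exists v; rewrite inE mem_head.
Qed.

Lemma CPT_rep_trivial_path_minimal (X : finType) (lt : rel X) (T : finType)
    (e : rel T) (W : X -> {set T}) (x y : X) :
  CPT_rep lt e W -> trivial_path (W x) -> ~~ lt y x.
Proof.
move=> [_ Wpath Wlt] Wx1; apply/negP => /Wlt /proper_card.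
rewrite Wx1 ltnS leqn0 cards_eq0 => /eqP Wy0.
by have := path_set_neq0 (Wpath y); rewrite Wy0 eqxx.
Qed.

Lemma module_comparable_out (X : finType) (lt : rel X) (M : {set X}) (y m : X) :
  is_module lt M -> y \notin M -> m \in M -> Defs.comparable lt y m ->
  {in M, forall a, Defs.comparable lt y a}.
Proof.
by move=> modM yM mM ym; case: (modM y yM) => // no; have := no m mM; rewrite ym.
Qed.

Section CutModule.

Variables (X : finType) (lt : rel X) (M : {set X}) (y lo hi : X).
Hypotheses (ltxx : irreflexive lt) (lt_trans : transitive lt).
Hypotheses (modM : is_module lt M) (yM : y \notin M).
Hypotheses (loM : lo \in M) (hiM : hi \in M) (lo_y : lt lo y) (y_hi : lt y hi).

Local Notation comparable := (Defs.comparable lt).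

Definition cut_module : {set X} :=
  [set z | if z \in M then lt z y
           else [forall a in M, (lt a y ==> lt a z) && (lt y a ==> lt z a)]].

Let ycM : {in M, forall a, comparable y a}.
Proof. by apply: (module_comparable_out modM yM hiM); rewrite /Defs.comparable y_hi. Qed.

Lemma cut_moduleM z : z \in M -> (z \in cut_module) = lt z y.
Proof. by rewrite inE => ->. Qed.

Lemma cut_module_out z a : z \notin M -> z \in cut_module -> a \in M ->
  (lt a y -> lt a z) /\ (lt y a -> lt z a).
Proof.
rewrite inE => /negbTE-> /forall_inP/(_ a) cut aM.
by case/andP: (cut aM) => /implyP ? /implyP.
Qed.

Lemma y_in_cut_module : y \in cut_module.
Proof.
rewrite inE (negbTE yM); apply/forall_inP => a _.
by apply/andP; split; apply/implyP.
Qed.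

Lemma lo_in_cut_module : lo \in cut_module.
Proof. by rewrite cut_moduleM. Qed.

Lemma hi_notin_cut_module : hi \notin cut_module.
Proof.
rewrite cut_moduleM //; apply/negP => hi_y.
by have := ltxx y; rewrite (lt_trans y_hi hi_y).
Qed.

Lemma cut_module_below_M w : w \in M -> w \notin cut_module ->
  {in cut_module, forall z, lt z w}.
Proof.
move=> wM wN; have y_w : lt y w.
  by case/orP: (ycM wM) => // w_y; rewrite cut_moduleM // w_y in wN.
move=> z zN; case: (boolP (z \in M)) => zM.
  by rewrite cut_moduleM in zN; [apply: lt_trans y_w|].
exact: (cut_module_out zM zN wM).2.
Qed.

Lemma cut_module_comparable_out w : w \notin M -> w \notin cut_module ->
  {in M, forall a, comparable w a} -> {in cut_module, forall z, comparable w z}.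
Proof.
move=> wM wN wcM z zN; case: (boolP (z \in M)) => [/wcM //|zM].
have [a aM] : exists2 a, a \in M &
    (lt a y && ~~ lt a w) || (lt y a && ~~ lt w a).
  move: wN; rewrite inE (negbTE wM) negb_forall_in => /exists_inP[a aM].
  by rewrite negb_and !negb_imply => ?; exists a.
have [az za] := cut_module_out zM zN aM.
case/orP=> /andP[a_rel_y /negbTE not_rel]; move: (wcM a aM);
  rewrite /Defs.comparable not_rel ?orbF //= => rel.
- by rewrite (lt_trans rel (az a_rel_y)).
- by rewrite (lt_trans (za a_rel_y) rel) orbT.
Qed.

Lemma cut_module_incomparable_out w : w \notin M ->
  {in M, forall a, ~~ comparable w a} -> {in cut_module, forall z, ~~ comparable w z}.
Proof.
move=> wM wncM z zN; case: (boolP (z \in M)) => [/wncM //|zM].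
have [lo_z _] := cut_module_out zM zN loM.
have [_ z_hi] := cut_module_out zM zN hiM.
apply/orP=> [[w_z | z_w]].
- by have /negP[] := wncM hi hiM; rewrite /Defs.comparable (lt_trans w_z (z_hi y_hi)).
- by have /negP[] := wncM lo loM; rewrite /Defs.comparable (lt_trans (lo_z lo_y) z_w) orbT.
Qed.

Lemma cut_module_is_module : is_module lt cut_module.
Proof.
move=> w wN; case: (boolP (w \in M)) => wM.
  left=> z /(cut_module_below_M wM wN) z_w.
  by rewrite /Defs.comparable z_w orbT.
case: (modM wM) => [wcM | wncM].
  by left; apply: cut_module_comparable_out.
by right; apply: cut_module_incomparable_out.
Qed.

Lemma between_not_strong_module : ~ strong_module lt M.
Proof.
move=> [_ /(_ _ cut_module_is_module)].
case=> [/setP/(_ lo) | /subsetP/(_ hi hiM) | /subsetP/(_ y y_in_cut_module)].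
- by rewrite inE in_set0 loM lo_in_cut_module.
- by rewrite (negbTE hi_notin_cut_module).
- by rewrite (negbTE yM).
Qed.

End CutModule.

Theorem mainTheorem3 (X : finType) (lt : rel X) (M : {set X}) :
  CPT_poset lt -> strong_module lt M ->
  (exists (T : finType) (e : rel T) (W : X -> {set T}),
      CPT_rep lt e W /\ exists2 x, x \in M & trivial_path (W x)) ->
  ~ (exists m y, [/\ m \in M, y \notin M & lt y m]).
Proof.
move=> [[ltxx lt_trans] _] strongM [T [e [W [repW [x xM Wx1]]]]] [m [y [mM yM y_m]]].
have x_y : lt x y.
  have /orP[y_x | //] : Defs.comparable lt y x.
    by apply: (module_comparable_out strongM.1 yM mM) => //; rewrite /Defs.comparable y_m.
  by have := CPT_rep_trivial_path_minimal y repW Wx1; rewrite y_x.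
exact: (between_not_strong_module ltxx lt_trans strongM.1 yM xM mM x_y y_m).
Qed.
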